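(* Let $n=2k$ with $k\ge 2$. Then $\{a_i,c_i : i=1,\ldots,n\}\cup\{d_{i'} : i'=1,\ldots,k\}$ is a strong resolving set of $U_n$.
   Context: For $n\ge 3$, $U_n$ is the graph with vertex set $\{a_i,b_i,c_i,d_i,e_i : 1\le i\le n\}$ and edge set $\{a_ia_{i+1}, b_ib_{i+1}, e_ie_{i+1}, a_ib_i, b_ic_i, c_id_i, d_ie_i, c_{i+1}d_i : 1\le i\le n\}$, indices taken modulo $n$. $d$ is the graph distance. A vertex $w$ strongly resolves distinct vertices $u,v$ if $d(v,w)=d(v,u)+d(u,w)$ or $d(u,w)=d(u,v)+d(v,w)$. A set $S$ is a strong resolving set if every two distinct vertices are strongly resolved by some vertex of $S$. *)

From mathcomp Require Import all_boot.
Set Implicit Arguments. Unset Strict Implicit. Unset Printing Implicit Defensive.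

Fixpoint reach (T : finType) (e : rel T) (k : nat) (x y : T) : bool :=
  if k is k'.+1 then reach e k' x y || [exists z, reach e k' x z && e z y]
  else x == y.

(* Every reachable vertex is
   reachable within #|T| - 1 steps, so searching k < #|T| suffices
   (for unreachable pairs the value is #|T|, irrelevant for connected graphs). *)
Definition dist (T : finType) (e : rel T) (x y : T) : nat :=
  find (fun k => reach e k x y) (iota 0 #|T|).

Definition strongly_resolves (T : finType) (e : rel T) (w u v : T) : bool :=
  (dist e v w == dist e v u + dist e u w) || (dist e u w == dist e u v + dist e v w).

Definition strong_resolving_set (T : finType) (e : rel T) (S : {set T}) : Prop :=
  forall u v : T, u != v -> exists2 w, w \in S & strongly_resolves e w u v.

(* Vertex (s, i) with s : 'I_5 encodes a_i, b_i, c_i, d_i, e_i for s = 0,1,2,3,4;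
   indices i range over 'I_n = {0,...,n-1} (paper's index i corresponds to i-1). *)
Definition Uvert (n : nat) := ('I_5 * 'I_n)%type.

Definition nxt (n : nat) (i j : 'I_n) : bool := (nat_of_ord j == (nat_of_ord i).+1 %% n).

(* oriented edge list: a_i a_{i+1}, b_i b_{i+1}, e_i e_{i+1}, a_i b_i, b_i c_i,
   c_i d_i, d_i e_i, c_{i+1} d_i *)
Definition U_edge0 (n : nat) (x y : Uvert n) : bool :=
  let s := nat_of_ord x.1 in let i := x.2 in
  let t := nat_of_ord y.1 in let j := y.2 in
  [|| [&& s == 0, t == 0 & nxt i j],
      [&& s == 1, t == 1 & nxt i j],
      [&& s == 4, t == 4 & nxt i j],
      [&& s == 0, t == 1 & i == j],
      [&& s == 1, t == 2 & i == j],
      [&& s == 2, t == 3 & i == j],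
      [&& s == 3, t == 4 & i == j]
    | [&& s == 2, t == 3 & nxt j i] ].

Definition U_adj (n : nat) : rel (Uvert n) := fun x y => U_edge0 x y || U_edge0 y x.

Definition Sset (n k : nat) : {set Uvert n} :=
  [set x : Uvert n | [|| nat_of_ord x.1 == 0, nat_of_ord x.1 == 2
                       | (nat_of_ord x.1 == 3) && (nat_of_ord x.2 < k)] ].

From mathcomp Require Import all_boot zify.
Set Implicit Arguments. Unset Strict Implicit. Unset Printing Implicit Defensive.

(* Outside S only the vertices b_i, e_i and d_i (i >= k) remain, and for each
   pair x, y of them we name a vertex w of S with x on a geodesic from y to w.
   Geodesicity is certified by a potential: a function P with P w = 0 that
   changes by at most 1 along every edge satisfies P <= d(., w), so any walk
   y -> x -> w of length at most P y forces d(y, w) = d(y, x) + d(x, w).  The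
   potentials are the distances from a_c, c_c and d_c, written in closed form
   in terms of the layer and of the forward offset from c around the cycle. *)

Section GraphDistance.
Variables (T : finType) (e : rel T).

Lemma reach_mono k m x y : reach e k x y -> k <= m -> reach e m x y.
Proof.
move=> hk; elim: m => [|m IH]; first by rewrite leqn0 => /eqP <-.
by rewrite leq_eqVlt => /orP [/eqP <- // | /IH /= ->].
Qed.

Lemma reach_cat a b x y z : reach e a x y -> reach e b y z -> reach e (a + b) x z.
Proof.
move=> hxy; elim: b z => [|b IH] z /=; first by move/eqP=> <-; rewrite addn0.
rewrite addnS /=; case/orP => [/IH -> // | /existsP [w /andP [hyw hwz]]].
by apply/orP; right; apply/existsP; exists w; rewrite IH.
Qed.

Lemma reach_edge x y : e x y -> reach e 1 x y.
Proof. by move=> hxy /=; apply/orP; right; apply/existsP; exists x; rewrite eqxx hxy. Qed.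

Lemma reach_sym : symmetric e -> forall k x y, reach e k x y -> reach e k y x.
Proof.
move=> e_sym; elim=> [|k IH] x y /=; first by rewrite eq_sym.
case/orP => [/IH -> // | /existsP [w /andP [hxw hwy]]].
have hyw : e y w by rewrite e_sym.
by have := reach_cat (reach_edge hyw) (IH _ _ hxw); rewrite add1n.
Qed.

Lemma reach_min a b x y : reach e a x y -> reach e b x y -> reach e (minn a b) x y.
Proof. by move=> ha hb; case: leqP. Qed.

Definition lipschitz (P : T -> nat) := forall a b, e a b -> P a <= P b + 1.

Lemma reach_lipschitz P k x y : lipschitz P -> reach e k x y -> P x <= P y + k.
Proof.
move=> hP; elim: k x y => [|k IH] x y /=; first by move/eqP=> ->; rewrite addn0.
case/orP => [/IH | /existsP [w /andP [/IH hxw /hP hwy]]]; lia.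
Qed.

Lemma dist_leq m x y : reach e m x y -> m < #|T| -> dist e x y <= m.
Proof.
move=> hm m_lt; rewrite leqNgt; apply/negP => /(before_find 0).
by rewrite nth_iota // add0n hm.
Qed.

Lemma reach_dist m x y : reach e m x y -> m < #|T| -> reach e (dist e x y) x y.
Proof.
move=> hm m_lt; have hfind : has (fun k => reach e k x y) (iota 0 #|T|).
  by apply/hasP; exists m; rewrite ?mem_iota.
have := nth_find 0 hfind; move: hfind; rewrite has_find size_iota => hlt.
by rewrite nth_iota.
Qed.

Lemma dist_refl x : dist e x x = 0.
Proof.
apply/eqP; rewrite -leqn0; apply: (@dist_leq 0); first exact: eqxx.
by apply/card_gt0P; exists x.
Qed.

Lemma dist_split_by_potential (P : T -> nat) w x y A B :
  lipschitz P -> P w = 0 -> reach e A y x -> reach e B x w ->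
  A + B < #|T| -> A + B <= P y ->
  dist e y w = dist e y x + dist e x w.
Proof.
move=> hP Pw0 hyx hxw AB_lt AB_le.
have A_lt : A < #|T| by lia.
have B_lt : B < #|T| by lia.
have d_yx := dist_leq hyx A_lt; have d_xw := dist_leq hxw B_lt.
have d_yw := dist_leq (reach_cat (reach_dist hyx A_lt) (reach_dist hxw B_lt)) ltac:(lia).
have := reach_lipschitz hP (reach_dist (reach_cat hyx hxw) AB_lt).
rewrite Pw0; lia.
Qed.

End GraphDistance.

Lemma strongly_resolves_sym (T : finType) (e : rel T) w u v :
  strongly_resolves e w u v = strongly_resolves e w v u.
Proof. by rewrite /strongly_resolves orbC. Qed.

(* (m - c) mod n, written without mod so that lia can reason about it. *)
Definition offset (n c m : nat) := if c <= m then m - c else m + n - c.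

Definition cycle_step (n f f' : nat) := (f' = f.+1 /\ f.+1 < n) \/ (f = n.-1 /\ f' = 0).

Section Offset.
Variable n : nat.
Implicit Types i j : 'I_n.

Lemma offset_cases c m :
  (c <= m /\ offset n c m = m - c) \/ (m < c /\ offset n c m = m + n - c).
Proof. rewrite /offset; case: leqP; lia. Qed.

Lemma offset_ord c i : c < n -> offset n c i < n.
Proof. by have := offset_cases c i; have := ltn_ord i; lia. Qed.

Lemma offset_id c : offset n c c = 0.
Proof. by rewrite /offset leqnn subnn. Qed.

Lemma offset_inj c i j : c < n -> offset n c i = offset n c j -> i = j.
Proof.
move=> c_lt; have := ltn_ord i; have := ltn_ord j.
have := offset_cases c i; have := offset_cases c j => hj hi j_lt i_lt hij.
by apply/val_inj => /=; lia.
Qed.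

Lemma offset_sum i j : i != j -> offset n i j + offset n j i = n.
Proof.
move=> hij; have : nat_of_ord i != nat_of_ord j by [].
have := ltn_ord i; have := ltn_ord j; have := offset_cases i j; have := offset_cases j i.
lia.
Qed.

Lemma val_ordS i : nat_of_ord (ordS i) = if i.+1 == n then 0 else i.+1.
Proof.
rewrite /=; have := ltn_ord i; case: eqP => [-> | ?] i_lt; first by rewrite modnn.
by rewrite modn_small //; lia.
Qed.

Lemma val_ord_pred j : nat_of_ord (ord_pred j) = if nat_of_ord j == 0 then n.-1 else j.-1.
Proof.
rewrite /=; have := ltn_ord j; case: eqP => [-> | ?] j_lt.
  by rewrite add0n modn_small //; lia.
have -> : (j + n).-1 = j.-1 + n by lia.
by rewrite modnDr modn_small //; lia.
Qed.

Lemma offset_nxt c i j : c < n -> nxt i j -> cycle_step n (offset n c i) (offset n c j).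
Proof.
rewrite /nxt /cycle_step => c_lt /eqP hj; have := ltn_ord j.
have := offset_cases c i; have := offset_cases c j.
case: (ltngtP i.+1 n) (ltn_ord i) => h i_lt; last rewrite h modnn in hj;
  rewrite ?modn_small // in hj; lia.
Qed.

Lemma offset_ordS i j : offset n (ordS j) i = (n - offset n i j).-1.
Proof.
have := val_ordS j; have := ltn_ord i; have := ltn_ord j.
have := offset_cases i j; have := offset_cases (ordS j) i; case: eqP; lia.
Qed.

Lemma offset_ordS_id i : 1 < n -> offset n i (ordS i) = 1.
Proof.
move=> n_gt1; have := val_ordS i; have := ltn_ord i.
have := offset_cases i (ordS i); case: eqP; lia.
Qed.

Lemma offset_ord_pred c j :
  c < n -> offset n c j = (offset n c (ord_pred j)).+1 \/ offset n c j = 0.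
Proof.
move=> c_lt; have := val_ord_pred j; have := ltn_ord j.
have := offset_cases c j; have := offset_cases c (ord_pred j); case: eqP; lia.
Qed.

End Offset.

(* Distances from a_0, c_0 and d_0 in U_n to the vertex of layer s
   (0..4 for a..e) at forward offset f (and g = n - f backwards). *)
Definition pot_a n s f := let g := n - f in match s with
  | 0 => minn f g | 1 => (minn f g).+1 | 2 => (minn f g).+2
  | 3 => 3 + minn f g.-1 | _ => 4 + minn f g.-1 end.

Definition pot_c n s f := let g := n - f in match s with
  | 0 => (minn f g).+2 | 1 => (minn f g).+1
  | 2 => minn (minn (2 * f) (f + 2)) (minn (2 * g) (g + 2))
  | 3 => minn (minn (2 * f + 1) (f + 3)) (minn (2 * g).-1 (g + 2))
  | _ => minn (f + 2) (g + 1) end.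

Definition pot_d n s f := let g := n - f in match s with
  | 0 => 3 + minn f.-1 g | 1 => 2 + minn f.-1 g
  | 2 => if f == 0 then 1 else minn (minn (2 * f).-1 (f + 2)) (minn (2 * g + 1) (g + 3))
  | 3 => minn (minn (2 * f) (f + 2)) (minn (2 * g) (g + 2))
  | _ => minn (f + 1) (g + 1) end.

Definition within1 (a b : nat) := a <= b + 1 /\ b <= a + 1.

(* The three kinds of edges of U_n, seen in (layer, offset) coordinates. *)
Definition layers_lipschitz (pot : nat -> nat -> nat -> nat) n :=
  [/\ forall s f, s < 4 -> f < n -> within1 (pot n s f) (pot n s.+1 f),
      forall s f f', (s == 0) || (s == 1) || (s == 4) -> f < n -> cycle_step n f f' ->
        within1 (pot n s f) (pot n s f') &
      forall f f', f < n -> cycle_step n f f' -> within1 (pot n 2 f') (pot n 3 f)].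

Lemma pot_a_lipschitz n : 2 <= n -> layers_lipschitz pot_a n.
Proof.
move=> n_ge2; split.
- by case=> [|[|[|[|s]]]] f //= _ f_lt; rewrite /within1; lia.
- by case=> [|[|[|[|[|s]]]]] f f' //= _ f_lt; rewrite /within1 /cycle_step; lia.
- by move=> f f' f_lt; rewrite /within1 /cycle_step /=; lia.
Qed.

Lemma pot_c_lipschitz n : 2 <= n -> layers_lipschitz pot_c n.
Proof.
move=> n_ge2; split.
- by case=> [|[|[|[|s]]]] f //= _ f_lt; rewrite /within1; lia.
- by case=> [|[|[|[|[|s]]]]] f f' //= _ f_lt; rewrite /within1 /cycle_step; lia.
- by move=> f f' f_lt; rewrite /within1 /cycle_step /=; lia.
Qed.

Lemma pot_d_lipschitz n : 2 <= n -> layers_lipschitz pot_d n.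
Proof.
move=> n_ge2; split.
- by case=> [|[|[|[|s]]]] f //= _ f_lt; rewrite /within1; case: (f =P 0); lia.
- by case=> [|[|[|[|[|s]]]]] f f' //= _ f_lt; rewrite /within1 /cycle_step; lia.
- by move=> f f' f_lt; rewrite /within1 /cycle_step /=; case: (f' =P 0); lia.
Qed.

Section Walks.
Variable n : nat.
Implicit Types i j : 'I_n.
Local Notation R := (reach (@U_adj n)).

Definition vtx s i : Uvert n := (inord s, i).

Lemma vtxE (x : Uvert n) : x = vtx x.1 x.2.
Proof. by case: x => s i; congr pair; apply/val_inj; rewrite /= inordK. Qed.

Definition centered (pot : nat -> nat -> nat -> nat) c (x : Uvert n) :=
  pot n (val x.1) (offset n c x.2).

Lemma centered_vtx pot c s i : s < 5 -> centered pot c (vtx s i) = pot n s (offset n c i).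
Proof. by move=> s_lt; rewrite /centered /= inordK. Qed.

Lemma centered_lipschitz pot c :
  layers_lipschitz pot n -> c < n -> lipschitz (@U_adj n) (centered pot c).
Proof.
case=> hlayer hcycle hcd c_lt.
suff hedge x y : U_edge0 x y -> within1 (centered pot c x) (centered pot c y).
  by move=> x y /orP [/hedge [] | /hedge [] _].
case: x y => [s i] [t j]; rewrite /U_edge0 /centered /=.
have fi := offset_ord i c_lt; have fj := offset_ord j c_lt.
have hstep (u v : 'I_n) : nxt u v -> cycle_step n (offset n c u) (offset n c v).
  exact: offset_nxt.
by do 3 (case/orP=> [/and3P [/eqP -> /eqP -> /hstep] | ]; first by apply: hcycle);
  do 4 (case/orP=> [/and3P [/eqP -> /eqP -> /eqP ->] | ]; first by apply: hlayer);
  case/and3P=> /eqP -> /eqP -> /hstep; apply: hcd.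
Qed.

Lemma U_adj_sym : symmetric (@U_adj n).
Proof. by move=> x y; rewrite /U_adj orbC. Qed.

Lemma reach_adj x y : U_adj x y -> R 1 x y.
Proof. exact: reach_edge. Qed.

Lemma reach_adj_sym x y : U_adj y x -> R 1 x y.
Proof. by rewrite U_adj_sym; exact: reach_edge. Qed.

Lemma reach_U_sym k x y : R k x y -> R k y x.
Proof. exact/reach_sym/U_adj_sym. Qed.

Lemma adj_cycle s i : (s == 0) || (s == 1) || (s == 4) -> U_adj (vtx s i) (vtx s (ordS i)).
Proof.
have hnxt : nxt i (ordS i) by rewrite /nxt.
by case/orP => [/orP [] | ] /eqP ->; rewrite /U_adj /U_edge0 /= !inordK //= hnxt.
Qed.

Lemma adj_layer s i : s < 4 -> U_adj (vtx s i) (vtx s.+1 i).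
Proof.
move=> s_lt; rewrite /U_adj /U_edge0 /= !inordK //; last by lia.
by case: s s_lt => [|[|[|[|]]]] //= _; rewrite eqxx ?orbT.
Qed.

Lemma adj_cd i : U_adj (vtx 2 (ordS i)) (vtx 3 i).
Proof. by rewrite /U_adj /U_edge0 /= !inordK //= /nxt eqxx !orbT. Qed.

Lemma reach_layers s t i : s <= t < 5 -> R (t - s) (vtx s i) (vtx t i).
Proof.
case/andP=> + t_lt; elim: t t_lt => [|t IH] t_lt.
  by rewrite leqn0 => /eqP ->; apply: eqxx.
rewrite leq_eqVlt => /orP [/eqP -> | s_le]; first by rewrite subnn; apply: eqxx.
rewrite subSn //; have := reach_cat (IH (ltnW t_lt) s_le) (reach_adj (adj_layer i t_lt)).
by rewrite addn1.
Qed.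

Lemma reach_cycle s i j : (s == 0) || (s == 1) || (s == 4) ->
  R (offset n i j) (vtx s i) (vtx s j).
Proof.
move=> hs; move hf : (offset n i j) => f.
elim: f j hf => [|f IH] j hf.
  have -> : j = i by apply: (@offset_inj _ i) => //; rewrite offset_id hf.
  exact: eqxx.
have [hpred | hj0] := offset_ord_pred j (ltn_ord i); last by rewrite hj0 in hf.
have := reach_cat (IH (ord_pred j) ltac:(lia)) (reach_adj (adj_cycle (ord_pred j) hs)).
by rewrite ord_predK addn1.
Qed.

Lemma resolves_by_potential pot c (w x y : Uvert n) A B :
  layers_lipschitz pot n -> c < n -> centered pot c w = 0 ->
  R A y x -> R B x w -> A + B < 5 * n -> A + B <= centered pot c y ->
  strongly_resolves (@U_adj n) w x y.
Proof.
move=> hpot c_lt hw hyx hxw AB_lt AB_le; apply/orP; left; apply/eqP.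
apply: dist_split_by_potential hw hyx hxw _ AB_le; first exact: centered_lipschitz.
by rewrite card_prod !card_ord.
Qed.

End Walks.

Arguments adj_layer [n] s i _.
Arguments adj_cd [n] i.
Arguments reach_layers [n] s t i _.
Arguments reach_cycle [n] s i j _.

Section Resolvers.
Variable k : nat.
Hypothesis k_ge2 : 2 <= k.
Local Notation n := (2 * k).
Local Notation SR := (strongly_resolves (@U_adj n)).
Implicit Types i j : 'I_n.

Let n_ge2 : 2 <= n. Proof. lia. Qed.

Lemma resolves_b_b i j : i != j -> SR (vtx 0 i) (vtx 1 i) (vtx 1 j).
Proof.
move=> hij; apply: (@resolves_by_potential _ pot_a i _ _ _
  (minn (offset n i j) (offset n j i)) 1 (pot_a_lipschitz n_ge2) (ltn_ord i)).
- by rewrite centered_vtx // offset_id /=; lia.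
- apply: reach_min; first exact: reach_U_sym (reach_cycle 1 i j isT).
  exact: reach_cycle 1 j i isT.
- exact: reach_adj_sym (adj_layer 0 i isT).
- by have := offset_ord j (ltn_ord i); lia.
- by rewrite centered_vtx //=; have := offset_sum hij; lia.
Qed.

Lemma resolves_b_d i j : SR (vtx 0 i) (vtx 1 i) (vtx 3 j).
Proof.
apply: (@resolves_by_potential _ pot_a i _ _ _
  (minn (offset n i j + 2) (offset n (ordS j) i + 2)) 1 (pot_a_lipschitz n_ge2) (ltn_ord i)).
- by rewrite centered_vtx // offset_id /=; lia.
- apply: reach_min.
    apply: reach_U_sym; apply: reach_mono (reach_cat (reach_cycle 1 i j isT)
      (reach_layers 1 3 j isT)) _; lia.
  apply: reach_mono (reach_cat (reach_cat (reach_adj_sym (adj_cd j))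
      (reach_adj_sym (adj_layer 1 (ordS j) isT))) (reach_cycle 1 (ordS j) i isT)) _; lia.
- exact: reach_adj_sym (adj_layer 0 i isT).
- by have := offset_ord j (ltn_ord i); lia.
- by rewrite centered_vtx //= offset_ordS; have := offset_ord j (ltn_ord i); lia.
Qed.

Lemma resolves_b_e i j : SR (vtx 0 i) (vtx 1 i) (vtx 4 j).
Proof.
apply: (@resolves_by_potential _ pot_a i _ _ _
  (minn (offset n i j + 3) (offset n (ordS j) i + 3)) 1 (pot_a_lipschitz n_ge2) (ltn_ord i)).
- by rewrite centered_vtx // offset_id /=; lia.
- apply: reach_min.
    apply: reach_U_sym; apply: reach_mono (reach_cat (reach_cycle 1 i j isT)
      (reach_layers 1 4 j isT)) _; lia.
  apply: reach_mono (reach_cat (reach_cat (reach_cat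
      (reach_adj_sym (adj_layer 3 j isT)) (reach_adj_sym (adj_cd j)))
      (reach_adj_sym (adj_layer 1 (ordS j) isT))) (reach_cycle 1 (ordS j) i isT)) _; lia.
- exact: reach_adj_sym (adj_layer 0 i isT).
- by have := offset_ord j (ltn_ord i); lia.
- by rewrite centered_vtx //= offset_ordS; have := offset_ord j (ltn_ord i); lia.
Qed.

Lemma resolves_e_e_near i j : 0 < offset n i j < k -> SR (vtx 0 i) (vtx 4 i) (vtx 4 j).
Proof.
move=> hf; apply: (@resolves_by_potential _ pot_a i _ _ _
  (offset n i j) 4 (pot_a_lipschitz n_ge2) (ltn_ord i)).
- by rewrite centered_vtx // offset_id /=; lia.
- exact: reach_U_sym (reach_cycle 4 i j isT).
- exact: reach_U_sym (reach_layers 0 4 i isT).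
- lia.
- by rewrite centered_vtx //=; lia.
Qed.

Lemma resolves_e_e_antipodal i j : offset n i j = k -> SR (vtx 3 i) (vtx 4 i) (vtx 4 j).
Proof.
move=> hf; apply: (@resolves_by_potential _ pot_d i _ _ _
  (offset n i j) 1 (pot_d_lipschitz n_ge2) (ltn_ord i)).
- by rewrite centered_vtx // offset_id /=; lia.
- exact: reach_U_sym (reach_cycle 4 i j isT).
- exact: reach_adj_sym (adj_layer 3 i isT).
- lia.
- by rewrite centered_vtx //=; lia.
Qed.

Lemma resolves_d_d_near i j : 0 < offset n i j < k -> SR (vtx 2 i) (vtx 3 i) (vtx 3 j).
Proof.
move=> hf; apply: (@resolves_by_potential _ pot_c i _ _ _
  (if offset n i j == 1 then 2 else offset n i j + 2) 1 (pot_c_lipschitz n_ge2) (ltn_ord i)).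
- by rewrite centered_vtx // offset_id /=; lia.
- case: eqP => [f1 | _].
    have -> : j = ordS i by apply: (@offset_inj _ i) => //; rewrite offset_ordS_id.
    apply: reach_U_sym.
    exact: reach_cat (reach_adj_sym (adj_cd i)) (reach_adj (adj_layer 2 (ordS i) isT)).
  apply: reach_U_sym; apply: reach_mono (reach_cat (reach_cat (reach_adj (adj_layer 3 i isT))
      (reach_cycle 4 i j isT)) (reach_adj_sym (adj_layer 3 j isT))) _; lia.
- exact: reach_adj_sym (adj_layer 2 i isT).
- by case: eqP; lia.
- by rewrite centered_vtx //=; case: eqP; lia.
Qed.

Lemma resolves_d_e_near i j : offset n j i < k -> SR (vtx 0 j) (vtx 3 j) (vtx 4 i).
Proof.
move=> hf; apply: (@resolves_by_potential _ pot_a j _ _ _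
  (offset n j i + 1) 3 (pot_a_lipschitz n_ge2) (ltn_ord j)).
- by rewrite centered_vtx // offset_id /=; lia.
- apply: reach_U_sym; apply: reach_mono (reach_cat (reach_adj (adj_layer 3 j isT))
    (reach_cycle 4 j i isT)) _; lia.
- exact: reach_U_sym (reach_layers 0 3 j isT).
- lia.
- by rewrite centered_vtx //=; lia.
Qed.

Lemma resolves_e_d_antipodal i j : offset n i j = k -> SR (vtx 3 i) (vtx 4 i) (vtx 3 j).
Proof.
move=> hf; apply: (@resolves_by_potential _ pot_d i _ _ _
  (offset n i j + 1) 1 (pot_d_lipschitz n_ge2) (ltn_ord i)).
- by rewrite centered_vtx // offset_id /=; lia.
- exact: reach_U_sym (reach_cat (reach_cycle 4 i j isT) (reach_adj_sym (adj_layer 3 j isT))).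
- exact: reach_adj_sym (adj_layer 3 i isT).
- lia.
- by rewrite centered_vtx //=; lia.
Qed.

Lemma resolves_d_e_far i j : 0 < offset n i j < k -> SR (vtx 2 (ordS j)) (vtx 3 j) (vtx 4 i).
Proof.
move=> hf; apply: (@resolves_by_potential _ pot_c (ordS j) _ _ _
  (offset n i j + 1) 1 (pot_c_lipschitz n_ge2) (ltn_ord _)).
- by rewrite centered_vtx // offset_id /=; lia.
- exact: reach_cat (reach_cycle 4 i j isT) (reach_adj_sym (adj_layer 3 j isT)).
- exact: reach_adj_sym (adj_cd j).
- lia.
- by rewrite centered_vtx //= offset_ordS; lia.
Qed.

Local Notation S := (Sset n k).

Definition resolved (x y : Uvert n) := exists2 w, w \in S & strongly_resolves (@U_adj n) w x y.

Lemma resolved_sym x y : resolved x y -> resolved y x.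
Proof. by case=> w wS hw; exists w; rewrite // strongly_resolves_sym. Qed.

Lemma mem_Sset s i : s < 5 -> (vtx s i \in S) = [|| s == 0, s == 2 | (s == 3) && (i < k)].
Proof. by move=> s_lt; rewrite inE /= inordK. Qed.

Lemma offset_pos i j : i != j -> 0 < offset n i j.
Proof.
move=> hij; have : nat_of_ord i != nat_of_ord j by [].
by have := offset_cases n i j; have := ltn_ord i; have := ltn_ord j; lia.
Qed.

(* Two antipodal indices lie in different halves, so one of them indexes a d-vertex of S. *)
Lemma offset_antipodal i j :
  offset n i j = k -> offset n j i = k /\ ((i < k) || (j < k)).
Proof.
have := offset_cases n i j; have := offset_cases n j i; have := ltn_ord i; have := ltn_ord j.
by case: (ltnP i k); case: (ltnP j k) => /=; lia.
Qed.

Lemma resolved_e_e i j : i != j -> resolved (vtx 4 i) (vtx 4 j).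
Proof.
move=> hij; have hsum := offset_sum hij; have hpos := offset_pos hij.
case: (ltngtP (offset n i j) k) => hf.
- by exists (vtx 0 i); [rewrite mem_Sset | apply: resolves_e_e_near; lia].
- apply: resolved_sym; exists (vtx 0 j); first by rewrite mem_Sset.
  by apply: resolves_e_e_near; have := offset_ord j (ltn_ord i); lia.
- have [_ /orP [ik | jk]] := offset_antipodal hf.
  + by exists (vtx 3 i); [rewrite mem_Sset // ik | exact: resolves_e_e_antipodal].
  + apply: resolved_sym; exists (vtx 3 j); first by rewrite mem_Sset // jk.
    by apply: resolves_e_e_antipodal; case: (offset_antipodal hf).
Qed.

Lemma resolved_d_d i j : i != j -> k <= i -> k <= j -> resolved (vtx 3 i) (vtx 3 j).
Proof.
move=> hij ik jk; have hsum := offset_sum hij; have hpos := offset_pos hij.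
case: (ltngtP (offset n i j) k) => hf.
- by exists (vtx 2 i); [rewrite mem_Sset | apply: resolves_d_d_near; lia].
- apply: resolved_sym; exists (vtx 2 j); first by rewrite mem_Sset.
  by apply: resolves_d_d_near; have := offset_ord j (ltn_ord i); lia.
- by have [_] := offset_antipodal hf; rewrite !ltnNge ik jk.
Qed.

Lemma resolved_e_d i j : k <= j -> resolved (vtx 4 i) (vtx 3 j).
Proof.
move=> jk; case: (ltnP (offset n j i) k) => hji.
  by apply: resolved_sym; exists (vtx 0 j); [rewrite mem_Sset | exact: resolves_d_e_near].
have hij : i != j by apply: contraTneq hji => ->; rewrite offset_id -ltnNge; lia.
have hsum := offset_sum hij; have hpos := offset_pos hij.
case: (eqVneq (offset n i j) k) => hf.
  have [_ /orP [ik | //]] := offset_antipodal hf; last by rewrite ltnNge jk.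
  by exists (vtx 3 i); [rewrite mem_Sset // ik | exact: resolves_e_d_antipodal].
apply: resolved_sym; exists (vtx 2 (ordS j)); first by rewrite mem_Sset.
by apply: resolves_d_e_far; lia.
Qed.

Lemma resolved_vtx s t i j : s < 5 -> t < 5 -> vtx s i != vtx t j -> resolved (vtx s i) (vtx t j).
Proof.
move=> s_lt t_lt hne.
case xS: (vtx s i \in S).
  by exists (vtx s i) => //; apply/orP; left; rewrite dist_refl addn0.
case yS: (vtx t j \in S).
  by exists (vtx t j) => //; apply/orP; right; rewrite dist_refl addn0.
have hij : s = t -> i != j by move=> est; subst t; apply: contraNneq hne => ->.
move: xS yS; rewrite !mem_Sset //.
case: s s_lt hne hij => [|[|[|[|[|s]]]]] //= _ hne hij;
  case: t t_lt hne hij => [|[|[|[|[|t]]]]] //= _ hne hij /negbT xS /negbT yS.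
- by exists (vtx 0 i); [rewrite mem_Sset | exact: resolves_b_b (hij erefl)].
- by exists (vtx 0 i); [rewrite mem_Sset | apply: resolves_b_d].
- by exists (vtx 0 i); [rewrite mem_Sset | apply: resolves_b_e].
- by apply: resolved_sym; exists (vtx 0 j); [rewrite mem_Sset | apply: resolves_b_d].
- by apply: (@resolved_d_d i j (hij erefl)); rewrite leqNgt.
- by apply: resolved_sym; apply: resolved_e_d; rewrite leqNgt.
- by apply: resolved_sym; exists (vtx 0 j); [rewrite mem_Sset | apply: resolves_b_e].
- by apply: resolved_e_d; rewrite leqNgt.
- exact: resolved_e_e (hij erefl).
Qed.

End Resolvers.

Theorem lemma4p8 (k : nat) (hk : 2 <= k) :
  strong_resolving_set (@U_adj (2 * k)) (Sset (2 * k) k).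
Proof.
move=> u v huv; rewrite (vtxE u) (vtxE v); apply: resolved_vtx => //.
by rewrite -!vtxE.
Qed.
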